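(* Let $s\geq 3$, let $p,q$ be coprime integers with $q>0$ and $p-(4s+7)q\geq 0$, and let $k\in G_{K_s}(p,q)$ satisfy $M=k^q$, $L=k^{-p}$. Let $P$ be a partially ordered set on which $G_{K_s}(p,q)$ acts (on the right) by order-preserving bijections. Suppose $x\in P$ satisfies one of: (1) $xk=x$, and $x$ and $xl$ are comparable in $P$; or (2) $xl=x$, and $x$ and $xk$ are comparable in $P$. Then $xg=x$ for every $g\in G_{K_s}(p,q)$.
   Context: Let $R=c\,l\,c\,l^{-1}c^{-1}l^{-s}c^{-1}l^{-1}c\,l\,c\,l^{s-1}$, $M=c$ and $L=c^{-(2s-2)}\,l\,c\,l^{s}\,c\,l^{s}\,c\,l\,c^{-(2s+9)}$, and $G_{K_s}(p,q)=\langle c,l\mid R,\ M^pL^q\rangle$. For an action we write $xg$ for the image of $x$ under $g$, and $xg_1g_2=(xg_1)g_2$. Two elements $x,y$ of $P$ are comparable if $x<y$, $x=y$ or $x>y$. *)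

From Stdlib Require Import ZArith List.
Import ListNotations.
Open Scope Z_scope.

Inductive word : Type :=
| wc : word
| wl : word
| w1 : word
| wmul : word -> word -> word
| winv : word -> word.

Fixpoint wpow_nat (w : word) (n : nat) : word :=
  match n with
  | O => w1
  | S n' => wmul (wpow_nat w n') w
  end.

Definition wpow (w : word) (z : Z) : word :=
  match z with
  | Z0 => w1
  | Zpos p => wpow_nat w (Pos.to_nat p)
  | Zneg p => winv (wpow_nat w (Pos.to_nat p))
  end.

Definition wprod (ws : list word) : word := fold_left wmul ws w1.

Definition relR (s : Z) : word :=
  wprod [wc; wl; wc; winv wl; winv wc; wpow wl (-s); winv wc; winv wl;
         wc; wl; wc; wpow wl (s - 1)].

Definition wordM : word := wc.

Definition wordL (s : Z) : word :=
  wprod [wpow wc (-(2*s - 2)); wl; wc; wpow wl s; wc; wpow wl s; wc; wl;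
         wpow wc (-(2*s + 9))].

(* Equality in G_{K_s}(p,q) = < c, l | R, M^p L^q >: the smallest congruence
   on words containing the group axioms and the two relators. *)
Inductive weq (s p q : Z) : word -> word -> Prop :=
| weq_refl a : weq s p q a a
| weq_sym a b : weq s p q a b -> weq s p q b a
| weq_trans a b d : weq s p q a b -> weq s p q b d -> weq s p q a d
| weq_mul a a' b b' : weq s p q a a' -> weq s p q b b' ->
    weq s p q (wmul a b) (wmul a' b')
| weq_inv a a' : weq s p q a a' -> weq s p q (winv a) (winv a')
| weq_assoc a b d : weq s p q (wmul (wmul a b) d) (wmul a (wmul b d))
| weq_id_l a : weq s p q (wmul w1 a) a
| weq_id_r a : weq s p q (wmul a w1) a
| weq_inv_l a : weq s p q (wmul (winv a) a) w1
| weq_inv_r a : weq s p q (wmul a (winv a)) w1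
| weq_relR : weq s p q (relR s) w1
| weq_relML : weq s p q (wmul (wpow wordM p) (wpow (wordL s) q)) w1.

Definition is_poset {P : Type} (le : P -> P -> Prop) : Prop :=
  (forall x, le x x) /\
  (forall x y, le x y -> le y x -> x = y) /\
  (forall x y z, le x y -> le y z -> le x z).

Definition comparable {P : Type} (le : P -> P -> Prop) (x y : P) : Prop :=
  le x y \/ x = y \/ le y x.

(* A right action of G_{K_s}(p,q) on P by order-preserving bijections,
   given on words; act x g is "xg". It must be well defined on G. *)
Definition is_order_action (s p q : Z) {P : Type} (le : P -> P -> Prop)
    (act : P -> word -> P) : Prop :=
  (forall g h, weq s p q g h -> forall x, act x g = act x h) /\
  (forall x, act x w1 = x) /\
  (forall x g h, act x (wmul g h) = act (act x g) h) /\
  (forall g x y, le x y -> le (act x g) (act y g)) /\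
  (forall g, (forall x y, act x g = act y g -> x = y) /\
             (forall y, exists x, act x g = y)).

From Stdlib Require Import ZArith List Lia Classical.
Import ListNotations.
Open Scope Z_scope.

(* Write f and g for the actions of k and k^-1 on P, and
   W = l c l^s c l^s c l, so that L = c^-(2s-2) W c^-(2s+9).  Since c acts as
   f^q and L as g^p, W acts as g^r with r = p - (4s+7)q >= 0; this is the only
   use of the hypothesis on p.
   Suppose x <= xk and x <= xl, one of them strictly.  From x <= xk we get
   xk^-1 <= x, hence xW = x g^r <= x.  On the other hand c, l and l^s move x
   weakly upwards, so they map every point strictly above x strictly above x;
   as x < x l c in either case, the positive word W gives x < xW, which is
   absurd.  Hence x <= xk and x <= xl force x to be fixed by k and l; applied
   to the order and to its dual this covers both hypotheses of the lemma.
   Finally c acts as a power of k, and a point fixed by the generators c and l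
   is fixed by the whole group. *)

Lemma iter_cancel {A} (f g : A -> A) :
  (forall z, f (g z) = z) -> forall n z, Nat.iter n f (Nat.iter n g z) = z.
Proof.
  intros fgK n; induction n as [|n IH]; intro z; [reflexivity|].
  rewrite Nat.iter_succ_r, Nat.iter_succ, fgK; apply IH.
Qed.

(* The bookkeeping behind "c^b L c^a acts as g^r when L acts as g^(b+r+a)". *)
Lemma iter_cancel_split {A} (f g : A -> A) :
  (forall z, f (g z) = z) -> (forall z, g (f z) = z) ->
  forall a b r y,
    Nat.iter b f (Nat.iter (b + r + a) g (Nat.iter a f y)) = Nat.iter r g y.
Proof.
  intros fgK gfK a b r y.
  rewrite Nat.iter_add, (iter_cancel g f gfK), Nat.iter_add.
  apply (iter_cancel f g fgK).
Qed.

Lemma iter_mul {A} (f : A -> A) n m z :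
  Nat.iter n (Nat.iter m f) z = Nat.iter (n * m) f z.
Proof. induction n as [|n IH]; [reflexivity|]; simpl; rewrite IH, <- Nat.iter_add; reflexivity. Qed.

Lemma iter_fix {A} (f : A -> A) n z : f z = z -> Nat.iter n f z = z.
Proof. intro E; induction n as [|n IH]; simpl; [reflexivity| rewrite IH; exact E]. Qed.

Lemma wpow_pos w z : 0 < z -> wpow w z = wpow_nat w (Z.to_nat z).
Proof. destruct z; intros; try lia; reflexivity. Qed.

Lemma wpow_opp_pos w z : 0 < z -> wpow w (- z) = winv (wpow_nat w (Z.to_nat z)).
Proof. destruct z; intros; try lia; reflexivity. Qed.

(* The positive word W = l c l^s c l^s c l occurring in the middle of L. *)
Definition wordW (s : Z) : word :=
  wprod [wl; wc; wpow wl s; wc; wpow wl s; wc; wl].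

Section WordAction.
Variables (s p q : Z) (P : Type) (act : P -> word -> P).
Hypothesis act_weq : forall g h, weq s p q g h -> forall x, act x g = act x h.
Hypothesis act_1 : forall x, act x w1 = x.
Hypothesis act_mul : forall x g h, act x (wmul g h) = act (act x g) h.

Lemma act_invK x w : act (act x (winv w)) w = x.
Proof. rewrite <- act_mul, (act_weq _ _ (weq_inv_l _ _ _ w)); apply act_1. Qed.

Lemma act_Kinv x w : act (act x w) (winv w) = x.
Proof. rewrite <- act_mul, (act_weq _ _ (weq_inv_r _ _ _ w)); apply act_1. Qed.

Lemma act_wprod ws x : act x (wprod ws) = fold_left act ws x.
Proof.
  unfold wprod; rewrite <- (act_1 x) at 2; generalize w1.
  induction ws as [|b ws IH]; intro a; simpl; [reflexivity|].
  rewrite IH, act_mul; reflexivity.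
Qed.

Lemma act_pow_nat w n x :
  act x (wpow_nat w n) = Nat.iter n (fun y => act y w) x.
Proof. induction n as [|n IH]; simpl; [apply act_1| rewrite act_mul, IH; reflexivity]. Qed.

Lemma act_inv_pow_nat w n x :
  act x (winv (wpow_nat w n)) = Nat.iter n (fun y => act y (winv w)) x.
Proof.
  rewrite <- (act_invK x (wpow_nat w n)) at 2; rewrite act_pow_nat.
  symmetry; apply iter_cancel; intro; apply act_Kinv.
Qed.

Lemma fixed_by_generators x :
  act x wc = x -> act x wl = x -> forall g, act x g = x.
Proof.
  intros Hc Hl g; induction g as [| | |g1 IH1 g2 IH2|g IH]; auto.
  - rewrite act_mul, IH1; auto.
  - rewrite <- IH at 1; apply act_Kinv.
Qed.

Lemma act_wordL y : 1 < s ->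
  act y (wordL s) =
  act (act (act y (winv (wpow_nat wc (Z.to_nat (2*s-2))))) (wordW s))
      (winv (wpow_nat wc (Z.to_nat (2*s+9)))).
Proof.
  intro hs; unfold wordL, wordW.
  rewrite !act_wprod, !wpow_opp_pos by lia; reflexivity.
Qed.

Section PeripheralElement.
Variable k : word.
Hypothesis hs : 1 < s.
Hypothesis hq : 0 < q.
Hypothesis hpq : 0 <= p - (4 * s + 7) * q.
Hypothesis hkM : weq s p q wordM (wpow k q).
Hypothesis hkL : weq s p q (wordL s) (wpow k (- p)).

Let f := fun y => act y k.
Let g := fun y => act y (winv k).

Lemma act_c y : act y wc = Nat.iter (Z.to_nat q) f y.
Proof.
  change wc with wordM; rewrite (act_weq _ _ hkM), wpow_pos by lia.
  apply act_pow_nat.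
Qed.

Lemma act_c_invpow n y :
  act y (winv (wpow_nat wc n)) = Nat.iter (n * Z.to_nat q) g y.
Proof.
  rewrite act_inv_pow_nat, <- iter_mul.
  induction n as [|n IH]; simpl; [reflexivity| rewrite IH].
  change wc with wordM.
  rewrite (act_weq _ _ (weq_inv _ _ _ _ _ hkM)), wpow_pos, act_inv_pow_nat by lia.
  reflexivity.
Qed.

Lemma act_L y : act y (wordL s) = Nat.iter (Z.to_nat p) g y.
Proof.
  rewrite (act_weq _ _ hkL), <- (Z.opp_involutive p) at 1.
  rewrite wpow_opp_pos, act_inv_pow_nat, Z.opp_involutive by lia; reflexivity.
Qed.

(* Since W = c^(2s-2) L c^(2s+9), it acts as the r-th power of k^-1,
   r = p - (4s+7)q. *)
Lemma act_W x :
  act x (wordW s) = Nat.iter (Z.to_nat (p - (4 * s + 7) * q)) g x.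
Proof.
  set (a := (Z.to_nat (2*s-2) * Z.to_nat q)%nat).
  set (b := (Z.to_nat (2*s+9) * Z.to_nat q)%nat).
  set (r := Z.to_nat (p - (4 * s + 7) * q)).
  assert (Hp : Z.to_nat p = (b + r + a)%nat).
  { subst a b r; apply Nat2Z.inj.
    rewrite !Nat2Z.inj_add, !Nat2Z.inj_mul, !Z2Nat.id by lia; lia. }
  assert (HL := act_wordL (Nat.iter a f x) ltac:(lia)).
  rewrite act_L, !act_c_invpow, (iter_cancel g f) in HL by (intro; apply act_Kinv).
  fold b in HL; rewrite Hp in HL.
  rewrite <- (iter_cancel f g (fun z => act_invK z k) b (act x (wordW s))), <- HL.
  apply iter_cancel_split; intro; [apply act_invK| apply act_Kinv].
Qed.

Section Order.
Variable le : P -> P -> Prop.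
Hypothesis le_refl : forall x, le x x.
Hypothesis le_anti : forall x y, le x y -> le y x -> x = y.
Hypothesis le_trans : forall x y z, le x y -> le y z -> le x z.
Hypothesis act_mono : forall w x y, le x y -> le (act x w) (act y w).
Hypothesis act_inj : forall w x y, act x w = act y w -> x = y.

Definition lt (x y : P) : Prop := le x y /\ x <> y.

Lemma lt_le_trans x y z : lt x y -> le y z -> lt x z.
Proof.
  intros [Hxy Hne] Hyz; split; [eauto|].
  intros <-; apply Hne, le_anti; assumption.
Qed.

Lemma rising_keeps_above x w :
  le x (act x w) -> forall y, lt x y -> lt x (act y w).
Proof.
  intros Hw y [Hxy Hne]; split; [eauto|].
  intro E; apply Hne, (act_inj w), le_anti; [apply act_mono, Hxy|].
  rewrite <- E; exact Hw.
Qed.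

Lemma iter_keeps_above x (F : P -> P) :
  (forall y, lt x y -> lt x (F y)) -> forall n y, lt x y -> lt x (Nat.iter n F y).
Proof. intros HF n; induction n as [|n IH]; simpl; auto. Qed.

Lemma fold_keeps_above x ws :
  Forall (fun w => le x (act x w)) ws ->
  forall y, lt x y -> lt x (fold_left act ws y).
Proof.
  induction 1 as [|w ws Hw _ IH]; intros y Hy; simpl; auto.
  apply IH, rising_keeps_above; assumption.
Qed.

Lemma iter_up (F : P -> P) y n :
  (forall a b, le a b -> le (F a) (F b)) -> le y (F y) -> le y (Nat.iter n F y).
Proof. intros M H; induction n as [|n IH]; simpl; [apply le_refl| eauto]. Qed.

Lemma iter_down (F : P -> P) y n :
  (forall a b, le a b -> le (F a) (F b)) -> le (F y) y -> le (Nat.iter n F y) y.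
Proof. intros M H; induction n as [|n IH]; simpl; [apply le_refl| eauto]. Qed.

Lemma pow_up_iter x w n :
  le x (act x w) -> le x (Nat.iter n (fun y => act y w) x).
Proof. intro H; apply iter_up; [intros; apply act_mono|]; assumption. Qed.

(* Strict rising under k propagates to c, which acts as a positive power of k. *)
Lemma c_rises_strictly x : lt x (act x k) -> lt x (act x wc).
Proof.
  intro Hk; rewrite act_c.
  replace (Z.to_nat q) with (S (pred (Z.to_nat q))) by lia.
  rewrite Nat.iter_succ_r; apply iter_keeps_above; [|exact Hk].
  apply rising_keeps_above, Hk.
Qed.

Lemma no_strict_rise x :
  le x (act x k) -> le x (act x wl) ->
  lt x (act x wl) \/ lt x (act x k) -> False.
Proof.
  intros Hk Hl Hstrict.
  assert (Hc : le x (act x wc)) by (rewrite act_c; apply pow_up_iter, Hk).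
  assert (Hls : le x (act x (wpow wl s))).
  { rewrite wpow_pos, act_pow_nat by lia; apply pow_up_iter, Hl. }
  assert (Hlc : lt x (act (act x wl) wc)).
  { destruct Hstrict as [Hl'|Hk'].
    - apply rising_keeps_above; assumption.
    - apply (lt_le_trans _ (act x wc)); [apply c_rises_strictly, Hk'|].
      apply act_mono, Hl. }
  assert (Hup : lt x (act x (wordW s))).
  { unfold wordW; rewrite act_wprod.
    apply (fold_keeps_above x [wpow wl s; wc; wpow wl s; wc; wl]);
      [repeat constructor; assumption| exact Hlc]. }
  assert (Hdown : le (act x (wordW s)) x).
  { rewrite act_W; apply iter_down; [intros; apply act_mono; assumption|].
    rewrite <- (act_Kinv x k) at 2; apply act_mono, Hk. }
  destruct Hup as [Hup Hne]; apply Hne, le_anti; assumption.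
Qed.

Lemma fixed_if_weakly_rising x :
  le x (act x k) -> le x (act x wl) -> act x k = x /\ act x wl = x.
Proof.
  intros Hk Hl; split; apply NNPP; intro Hne;
    apply (no_strict_rise x Hk Hl); [right| left]; split; auto.
Qed.

End Order.
End PeripheralElement.
End WordAction.

Lemma is_poset_dual {P : Type} (le : P -> P -> Prop) :
  is_poset le -> is_poset (fun a b => le b a).
Proof. intros (Hr & Ha & Ht); repeat split; eauto. Qed.

(* Both hypotheses of the lemma force x to be fixed by k and l: split the
   comparability into the two weak inequalities, using the dual order for the
   downward one. *)
Lemma fixed_by_k_and_l (s p q : Z) (hs : 1 < s) (hq : 0 < q)
  (hpq : 0 <= p - (4 * s + 7) * q)
  (k : word) (hkM : weq s p q wordM (wpow k q))
  (hkL : weq s p q (wordL s) (wpow k (- p)))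
  (P : Type) (le : P -> P -> Prop) (hP : is_poset le)
  (act : P -> word -> P) (hact : is_order_action s p q le act) (x : P) :
  (act x k = x /\ comparable le x (act x wl)) \/
  (act x wl = x /\ comparable le x (act x k)) ->
  act x k = x /\ act x wl = x.
Proof.
  destruct hact as (Hweq & H1 & Hmul & Hmono & Hbij).
  assert (Hinj : forall w a b, act a w = act b w -> a = b) by (intro w; apply Hbij).
  assert (Hfix : forall le', is_poset le' ->
            (forall w a b, le' a b -> le' (act a w) (act b w)) ->
            le' x (act x k) -> le' x (act x wl) -> act x k = x /\ act x wl = x).
  { intros le' (Hr & Ha & Ht) Hm.
    exact (fixed_if_weakly_rising s p q P act Hweq H1 Hmul k hs hq hpq hkM hkL
             le' Hr Ha Ht Hm Hinj x). }
  assert (Hdual := is_poset_dual le hP).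
  assert (Hmono' : forall w a b, le b a -> le (act b w) (act a w)) by auto.
  assert (Hr := proj1 hP).
  intros [[Hk [H|[H|H]]]|[Hl [H|[H|H]]]].
  - apply (Hfix le hP Hmono); [rewrite Hk; apply Hr| exact H].
  - auto.
  - apply (Hfix _ Hdual Hmono'); [rewrite Hk; apply Hr| exact H].
  - apply (Hfix le hP Hmono); [exact H| rewrite Hl; apply Hr].
  - auto.
  - apply (Hfix _ Hdual Hmono'); [exact H| rewrite Hl; apply Hr].
Qed.

Theorem lemma3p3 (s p q : Z) (hs : 3 <= s) (hcop : Z.gcd p q = 1)
  (hq : 0 < q) (hpq : 0 <= p - (4 * s + 7) * q)
  (k : word) (hkM : weq s p q wordM (wpow k q))
  (hkL : weq s p q (wordL s) (wpow k (- p)))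
  (P : Type) (le : P -> P -> Prop) (hP : is_poset le)
  (act : P -> word -> P) (hact : is_order_action s p q le act)
  (x : P)
  (hx : (act x k = x /\ comparable le x (act x wl)) \/
        (act x wl = x /\ comparable le x (act x k))) :
  forall g : word, act x g = x.
Proof.
  destruct (fixed_by_k_and_l s p q ltac:(lia) hq hpq k hkM hkL P le hP act hact x hx)
    as [Hk Hl].
  destruct hact as (Hweq & H1 & Hmul & _).
  apply (fixed_by_generators s p q P act Hweq H1 Hmul); [|exact Hl].
  rewrite (act_c s p q P act Hweq H1 Hmul k hq hkM); apply iter_fix, Hk.
Qed.
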